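(* Let $G$ and $H$ be finite abelian groups, written additively, of the same even order $k>2$, let $f:G\to H$ be semi-planar, and suppose $S(G,H;f)$ splits into two substructures $S_1$ and $S_2$ with $\mathcal{L}(0,0)\in S_1$. For $i=1,2$ and $a\in G$ let $P_a^i=\{b\in H : \mathcal{L}(a,b)\in S_i\}$, and let $S(a,b)=\{t\in G : f(t-a)=f(t)+b\}$. Then for every non-zero $a\in G$, $$P_a^1=\{b\in H : |S(a,b)|=2\},\qquad P_a^2=\{b\in H : |S(a,b)|=0\}.$$
   Context: A function $f:G\to H$ is semi-planar if for every non-identity $a\in G$ and every $y\in H$, the equation $f(x+a)-f(x)=y$ has either $0$ or $2$ solutions $x\in G$. The incidence structure $S(G,H;f)$ has points $(x,y)\in G\times H$ and lines $\mathcal{L}(a,b)$ for $(a,b)\in G\times H$, with $(x,y)$ incident with $\mathcal{L}(a,b)$ iff $y=f(x-a)+b$. Its incidence graph is the bipartite graph on points and lines with an edge for each incident pair. $S(G,H;f)$ splits into two substructures $S_1,S_2$ if its incidence graph has exactly two connected components; $S_1$ and $S_2$ are the incidence structures formed by the points and lines of the two components, and $\mathcal{L}(a,b)\in S_i$ means the line lies in component $S_i$. *)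

From mathcomp Require Import all_boot all_order all_algebra.
Set Implicit Arguments. Unset Strict Implicit. Unset Printing Implicit Defensive.
Import GRing.Theory.
Local Open Scope ring_scope.

Definition semiplanar (G H : finZmodType) (f : G -> H) : Prop :=
  forall (a : G) (y : H), a != 0 ->
    #|[set x : G | f (x + a) - f x == y]| = 0%N \/
    #|[set x : G | f (x + a) - f x == y]| = 2%N.

(* Vertices of the incidence graph of S(G,H;f): inl (x,y) is the point (x,y),
   inr (a,b) is the line L(a,b). *)
Definition vertex (G H : finZmodType) := ((G * H) + (G * H))%type.

Definition incident (G H : finZmodType) (f : G -> H) (p l : G * H) : bool :=
  p.2 == f (p.1 - l.1) + l.2.

Definition incid_graph (G H : finZmodType) (f : G -> H) : rel (vertex G H) :=
  fun u v => match u, v with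
             | inl p, inr l => incident f p l
             | inr l, inl p => incident f p l
             | _, _ => false
             end.

(* S(G,H;f) splits into two substructures: the incidence graph has exactly
   two connected components. *)
Definition splits_in_two (G H : finZmodType) (f : G -> H) : Prop :=
  n_comp (incid_graph f) [pred _ : vertex G H | true] = 2%N.

Definition in_S1 (G H : finZmodType) (f : G -> H) (a : G) (b : H) : bool :=
  connect (incid_graph f) (inr (0, 0)) (inr (a, b)).

Definition in_S2 (G H : finZmodType) (f : G -> H) (a : G) (b : H) : bool :=
  ~~ in_S1 f a b.

Definition P1 (G H : finZmodType) (f : G -> H) (a : G) : {set H} :=
  [set b | in_S1 f a b].
Definition P2 (G H : finZmodType) (f : G -> H) (a : G) : {set H} :=
  [set b | in_S2 f a b].

Definition Sab (G H : finZmodType) (f : G -> H) (a : G) (b : H) : {set G} :=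
  [set t | f (t - a) == f t + b].

(** Translations (x, y) |-> (x + c, y + d) are automorphisms of the incidence
    graph acting regularly on lines, so the set K of all (a, b) with L(a, b) in
    S_1 is a subgroup of G x H; as there are two components, it has index 2 and
    contains every double (0, 2c), which makes membership of (a, b) in K
    invariant under b |-> -b.  If |S(a, b)| = 2, the lines L(0, 0) and L(a, b)
    meet, so the set N_a of such b lies in P_a^1.  Semi-planarity makes each
    |S(a, b)| equal to 0 or 2, and they sum to |G|, hence |N_a| = k/2.  Since
    some L(0, d) lies in S_2, the translate d + N_a lies in P_a^2, so both
    P_a^1 and P_a^2 have at least k/2 elements and P_a^1 = N_a. *)
From mathcomp Require Import all_boot all_order all_algebra.
From mathcomp Require Import zify.
Set Implicit Arguments. Unset Strict Implicit. Unset Printing Implicit Defensive.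
Import GRing.Theory.
Local Open Scope ring_scope.

Section TwoComponents.
Variables (T : finType) (e : rel T).
Hypotheses (e_sym : connect_sym e) (two_comp : n_comp e T = 2%N).

Lemma card_roots2 : #|[set x | roots e x]| = 2%N.
Proof. by rewrite -two_comp; apply: eq_card => x; rewrite !inE andbT. Qed.

Lemma exists_not_connect (r : T) : exists v, ~~ connect e r v.
Proof.
have [x [y [rx ry xy]]] : exists x y : T,
    [/\ x \in [set x | roots e x], y \in [set x | roots e x] & x != y].
  by apply/card_gt1P; rewrite card_roots2.
rewrite !inE in rx ry.
have [xr|xr] := eqVneq x (fingraph.root e r); [exists y | exists x].
  by apply: contra xy => /(fingraph.rootP e_sym); rewrite (eqP ry) -xr => ->.
by apply: contra xr => /(fingraph.rootP e_sym) ->; rewrite (eqP rx).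
Qed.

Lemma connect_not_connect (r u v : T) :
  ~~ connect e r u -> ~~ connect e r v -> connect e u v.
Proof.
have neq_root w : ~~ connect e r w -> fingraph.root e r != fingraph.root e w.
  by apply: contra => /eqP/(fingraph.rootP e_sym).
move=> /neq_root ru /neq_root rv; apply/(fingraph.rootP e_sym); apply/eqP.
have : (#|fingraph.root e r |: [set fingraph.root e u; fingraph.root e v]| <= 2)%N.
  rewrite -card_roots2; apply/subset_leq_card/subsetP => x.
  by rewrite !inE => /or3P[] /eqP->; apply: roots_root.
by rewrite cardsU1 cards2 !inE negb_or ru rv; case: eqP.
Qed.

End TwoComponents.

Section IncidenceGraph.
Variables (G H : finZmodType) (f : G -> H).
Local Notation e := (incid_graph f).

Lemma connect_incid_sym : connect_sym e.
Proof. by apply: sym_connect_sym; case=> [p|l] [q|m]. Qed.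

Definition translate (c : G) (d : H) (v : vertex G H) : vertex G H :=
  match v with
  | inl p => inl (p.1 + c, p.2 + d)
  | inr l => inr (l.1 + c, l.2 + d)
  end.

Lemma incid_graph_translate c d u v : e (translate c d u) (translate c d v) = e u v.
Proof.
have incidentD x y a b :
    incident f (x + c, y + d) (a + c, b + d) = incident f (x, y) (a, b).
  by rewrite /incident /= opprD addrACA subrr addr0 addrA (inj_eq (addIr d)).
by case: u => [[x y]|[a b]]; case: v => [[x' y']|[a' b']] //=; rewrite incidentD.
Qed.

Lemma connect_translate c d u v :
  connect e u v -> connect e (translate c d u) (translate c d v).
Proof.
case/connectP=> p pth ->; apply/connectP; exists (map (translate c d) p).
  by elim: p u pth => //= w p IH u /andP[euw pw]; rewrite incid_graph_translate euw IH.
by rewrite last_map.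
Qed.

Lemma in_S1D a b a' b' : in_S1 f a b -> in_S1 f a' b' -> in_S1 f (a + a') (b + b').
Proof.
move=> h h'; apply: connect_trans h _.
by have := connect_translate a b h'; rewrite /= !add0r (addrC a') (addrC b').
Qed.

Lemma in_S1N a b : in_S1 f a b -> in_S1 f (- a) (- b).
Proof.
move=> h; have := connect_translate (- a) (- b) h.
by rewrite /= !add0r !subrr connect_incid_sym.
Qed.

Lemma in_S1_common_point a b x : f x = f (x - a) + b -> in_S1 f a b.
Proof.
move=> fx; apply: (connect_trans (y := inl (x, f x))); apply: connect1;
  by rewrite /= /incident /= ?subr0 ?addr0 -?fx.
Qed.

Hypothesis hsplit : splits_in_two f.

Lemma in_S1B_notin a b a' b' :
  ~~ in_S1 f a b -> ~~ in_S1 f a' b' -> in_S1 f (a' - a) (b' - b).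
Proof.
move=> h h'; have := connect_translate (- a) (- b)
  (connect_not_connect connect_incid_sym hsplit h h').
by rewrite /= !subrr.
Qed.

Lemma exists_notin_S1_0 : exists d, ~~ in_S1 f 0 d.
Proof.
have [[[x y]|[a b]] out] := exists_not_connect connect_incid_sym hsplit (inr (0, 0)).
  exists (y - f x); apply: contra out => h; apply: connect_trans h _.
  by apply: connect1; rewrite /= /incident /= subr0 addrC subrK.
have ab' : in_S1 f a (f 0 - f (- a)).
  by apply: (in_S1_common_point (x := 0)); rewrite sub0r addrC subrK.
exists (b - (f 0 - f (- a))); apply: contra out => h.
by have := in_S1D ab' h; rewrite addr0 addrC subrK.
Qed.

Lemma in_S1_double c : in_S1 f 0 (c + c).
Proof.
have [hc|hc] := boolP (in_S1 f 0 c); first by have := in_S1D hc hc; rewrite addr0.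
have hNc : ~~ in_S1 f 0 (- c) by apply: contra hc => /in_S1N; rewrite oppr0 opprK.
by have := in_S1B_notin hNc hc; rewrite subr0 opprK.
Qed.

Lemma in_S1_oppr a b : in_S1 f a (- b) = in_S1 f a b.
Proof.
apply/idP/idP => h.
  by have := in_S1D h (in_S1_double b); rewrite addr0 addrA addNr add0r.
by have := in_S1D h (in_S1_double (- b)); rewrite addr0 addrA subrr add0r.
Qed.

Lemma in_S1_Sab a b t : t \in Sab f a b -> in_S1 f a b.
Proof.
rewrite inE => /eqP ht; rewrite -in_S1_oppr.
by apply: (in_S1_common_point (x := t)); rewrite ht addrK.
Qed.

End IncidenceGraph.

Section SemiplanarCount.
Variables (G H : finZmodType) (f : G -> H) (a : G).

Lemma sum_card_Sab : (\sum_(b : H) #|Sab f a b| = #|G|)%N.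
Proof.
rewrite -sum1_card (partition_big (fun t => f (t - a) - f t) predT) //=.
apply: eq_bigr => b _; rewrite -sum1_card; apply: eq_bigl => t.
by rewrite !inE subr_eq (addrC b).
Qed.

Hypotheses (hf : semiplanar f) (a_neq0 : a != 0).

Lemma card_Sab b : #|Sab f a b| = 0%N \/ #|Sab f a b| = 2%N.
Proof.
have -> : Sab f a b = [set x | f (x + - a) - f x == b].
  by apply/setP => t; rewrite !inE subr_eq (addrC b).
by apply: hf; rewrite oppr_eq0.
Qed.

Lemma card_Sab2 : (#|[set b | #|Sab f a b| == 2%N]| * 2 = #|G|)%N.
Proof.
rewrite -sum_card_Sab -sum_nat_const big_mkcond /=; apply: eq_bigr => b _.
by rewrite inE; case: (card_Sab b) => ->.
Qed.

End SemiplanarCount.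

Lemma set_eq_half (T : finType) (A N N' : {set T}) :
  N \subset A -> N' \subset ~: A -> #|N'| = #|N| -> (#|N| * 2 = #|T|)%N -> A = N.
Proof.
move=> /[dup] sNA /subset_leq_card leNA /subset_leq_card leN'A eqN' halfN.
apply/eqP; rewrite eq_sym eqEcard sNA /=.
by move: (cardsC A) leNA leN'A; rewrite eqN' -halfN; lia.
Qed.

Theorem lemma4 (G H : finZmodType) (k : nat) (f : G -> H)
  (hG : #|G| = k) (hH : #|H| = k) (hk_even : ~~ odd k) (hk : (2 < k)%N)
  (hf : semiplanar f) (hsplit : splits_in_two f) :
  forall a : G, a != 0 ->
    P1 f a = [set b : H | #|Sab f a b| == 2%N] /\
    P2 f a = [set b : H | #|Sab f a b| == 0%N].
Proof.
move=> a a_neq0; set N := [set b | _].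
have [d notin_d] := exists_notin_S1_0 hsplit.
have NP1 : N \subset P1 f a.
  apply/subsetP => b; rewrite !inE => /eqP Sab2.
  have /set0Pn[t] : Sab f a b != set0 by rewrite -card_gt0 Sab2.
  exact: in_S1_Sab.
have P1E : P1 f a = N.
  apply: (set_eq_half NP1 (N' := [set d + b | b in N])).
  - apply/subsetP => _ /imsetP[b /(subsetP NP1) P1b ->].
    rewrite !inE in P1b *; apply: contra notin_d => h.
    by have := in_S1D (in_S1N P1b) h; rewrite addNr addrCA addNr addr0.
  - exact/card_imset/addrI.
  - by rewrite hH -hG card_Sab2.
split=> //; apply/setP => b; move/setP/(_ b): P1E.
rewrite /P2 /P1 !inE /in_S2 => ->.
by case: (card_Sab hf a_neq0 b) => ->.
Qed.
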